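(* Under the setting below, let $(x^*,z^*,s^* )$ with multiplier $\lambda^*$ for (C) (and nonnegative multipliers for the other constraints) be a KKT point of (P). Then for every $t$ with $(\beta_t,\theta_t)\in\Omega^{I}_t(\lambda^* )$ we have $(x_t^*,z_t^* )=(1,0)$, where $\Omega^{I}_t(\lambda)=\Big\{(\beta,\theta):\beta>0,\ \theta>\frac{\beta c_t e_t'(c_t)+d_t\lambda}{u_t'(1)},\ \beta<\frac{p_tc_t+r_t\lambda}{c_te_t'(c_t)}\Big\}$.
   Context: Fix an integer $T\ge 1$, a data cap $Q>0$ and an overage fee $\pi>0$. For each $t\in\{1,\dots,T\}$ fix reals $d_t\ge 0$, $r_t\ge 0$, $c_t>0$, $p_t>0$, $\theta_t>0$, $\beta_t>0$ and functions $u_t,e_t:[0,\infty)\to\mathbb{R}$ such that: $u_t$ is continuous, increasing and strictly concave, differentiable on $(0,\infty)$, and $u_t':(0,\infty)\to(0,\infty)$ is a strictly decreasing bijection with inverse $u_t'^{-1}$; $e_t$ is increasing, strictly convex and continuously differentiable, and $e_t':[0,\infty)\to[0,\infty)$ is a strictly increasing bijection with inverse $e_t'^{-1}$. For $0\le z\le x\le 1$ let $\tilde f_t(x,z)=\theta_t u_t(x)-\beta_t e_t((x-z)c_t)-p_t c_t z$ and $\tilde h_t(x,z)=d_t x+r_t z$. Problem (P): maximize $\sum_{t=1}^T \tilde f_t(x_t,z_t)-\pi s$ over $x,z\in\mathbb{R}^T$, $s\in\mathbb{R}$, subject to $0\le z_t\le x_t\le 1$ for all $t$, $s\ge 0$,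 and (C): $s\ge \sum_{t=1}^T\tilde h_t(x_t,z_t)-Q$. A KKT point of (P) consists of a feasible $(x^*,z^*,s^* )$ and nonnegative Lagrange multipliers for all constraints satisfying stationarity of the Lagrangian and complementary slackness; $\lambda^*$ denotes the multiplier of (C) (the shadow price of wireless data). *)

(* concrete reals R. Periods are indexed t = 0 .. T-1. *)
From Stdlib Require Import Reals.
Open Scope R_scope.

Fixpoint sumT (f : nat -> R) (n : nat) : R :=
  match n with O => 0 | S k => sumT f k + f k end.

Definition has_deriv_nonneg (f : R -> R) (x l : R) : Prop :=
  forall eps, 0 < eps -> exists delta, 0 < delta /\
    forall y, 0 <= y -> y <> x -> Rabs (y - x) < delta ->
      Rabs ((f y - f x) / (y - x) - l) < eps.

Definition cont_nonneg (f : R -> R) (x : R) : Prop :=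
  forall eps, 0 < eps -> exists delta, 0 < delta /\
    forall y, 0 <= y -> Rabs (y - x) < delta -> Rabs (f y - f x) < eps.

Definition utility_hyp (u up : R -> R) : Prop :=
  (forall x, 0 <= x -> cont_nonneg u x) /\
  (forall x y, 0 <= x -> x < y -> u x < u y) /\
  (forall x y l, 0 <= x -> 0 <= y -> x <> y -> 0 < l < 1 ->
      u (l * x + (1 - l) * y) > l * u x + (1 - l) * u y) /\
  (forall x, 0 < x -> derivable_pt_lim u x (up x)) /\
  (forall x, 0 < x -> 0 < up x) /\
  (forall x y, 0 < x -> x < y -> up y < up x) /\
  (forall w, 0 < w -> exists x, 0 < x /\ up x = w).

Definition cost_hyp (e ep : R -> R) : Prop :=
  (forall x y, 0 <= x -> x < y -> e x < e y) /\
  (forall x y l, 0 <= x -> 0 <= y -> x <> y -> 0 < l < 1 ->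
      e (l * x + (1 - l) * y) < l * e x + (1 - l) * e y) /\
  (forall x, 0 <= x -> has_deriv_nonneg e x (ep x)) /\
  (forall x, 0 <= x -> cont_nonneg ep x) /\
  (forall x, 0 <= x -> 0 <= ep x) /\
  (forall x y, 0 <= x -> x < y -> ep x < ep y) /\
  (forall w, 0 <= w -> exists x, 0 <= x /\ ep x = w).

Definition ftil (u e : R -> R) (theta beta c p x z : R) : R :=
  theta * u x - beta * e ((x - z) * c) - p * c * z.
Definition htil (d r x z : R) : R := d * x + r * z.

(* Multipliers: a t for z_t >= 0, b t for z_t <= x_t,
   g t for x_t <= 1, mu for s >= 0, lam for (C).  Stationarity of the
   Lagrangian  sum f~ - pi s + sum a z + sum b (x - z) + sum g (1 - x)
   + mu s + lam (s - sum h~ + Q)  w.r.t. x_t, z_t, s.  The partial derivative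
   of f~_t in x_t requires the derivative of u_t at x_t (within [0,oo)). *)
Definition KKT (T : nat) (Q pi : R) (d r c p theta beta : nat -> R)
  (u e ep : nat -> R -> R)
  (x z : nat -> R) (s : R) (a b g : nat -> R) (mu lam : R) : Prop :=
  (forall t, (t < T)%nat -> 0 <= z t /\ z t <= x t /\ x t <= 1) /\
  0 <= s /\
  s >= sumT (fun t => htil (d t) (r t) (x t) (z t)) T - Q /\
  (forall t, (t < T)%nat -> 0 <= a t /\ 0 <= b t /\ 0 <= g t) /\
  0 <= mu /\ 0 <= lam /\
  (forall t, (t < T)%nat -> exists du, has_deriv_nonneg (u t) (x t) du /\
      theta t * du - beta t * c t * ep t ((x t - z t) * c t)
        + b t - g t - lam * d t = 0) /\
  (forall t, (t < T)%nat ->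
      beta t * c t * ep t ((x t - z t) * c t) - p t * c t
        + a t - b t - lam * r t = 0) /\
  - pi + mu + lam = 0 /\
  (forall t, (t < T)%nat ->
      a t * z t = 0 /\ b t * (x t - z t) = 0 /\ g t * (1 - x t) = 0) /\
  mu * s = 0 /\
  lam * (s - sumT (fun t => htil (d t) (r t) (x t) (z t)) T + Q) = 0.

Definition OmegaI (c d p r : R) (e'c u'1 : R) (lam : R) (be th : R) : Prop :=
  0 < be /\ th > (be * c * e'c + d * lam) / u'1 /\
  be < (p * c + r * lam) / (c * e'c).

From Stdlib Require Import Reals Lra Psatz.
Open Scope R_scope.

(* Fix a period t with (beta_t, theta_t) in Omega^I_t(lambda).
   Since (x_t - z_t) c_t <= c_t and e_t' is increasing, the marginal
   congestion cost beta_t c_t e_t'((x_t - z_t) c_t) is at most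
   beta_t c_t e_t'(c_t).
   - The right-hand inequality of Omega^I makes this cost smaller than the
     marginal price p_t c_t + r_t lambda of cellular data, so stationarity in
     z_t forces the multiplier of z_t >= 0 to be positive; complementary
     slackness then gives z_t = 0.
   - If x_t < 1, the multiplier of x_t <= 1 vanishes, and stationarity in x_t
     bounds theta_t u_t'(x_t) by the same cost plus d_t lambda, which the
     left-hand inequality of Omega^I places strictly below theta_t u_t'(1).
     This contradicts the fact that derivatives of a concave function are
     nonincreasing, so x_t = 1.
   The file first develops the tangent-line inequality for concave functions
   on [0,oo) with one-sided derivatives, derives the antitonicity of such
   derivatives, unpacks the inequalities defining Omega^I, and concludes. *)

Definition concave_nonneg (u : R -> R) : Prop :=
  forall x y l, 0 <= x -> 0 <= y -> x <> y -> 0 < l < 1 ->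
    l * u x + (1 - l) * u y <= u (l * x + (1 - l) * y).

Lemma derivable_pt_lim_has_deriv_nonneg (u : R -> R) (q D : R) :
  derivable_pt_lim u q D -> has_deriv_nonneg u q D.
Proof.
  intros Hder eps Heps. destruct (Hder eps Heps) as [delta Hdelta].
  exists delta. split; [apply cond_pos|]. intros y _ Hyq Hy.
  specialize (Hdelta (y - q)). replace (q + (y - q)) with y in Hdelta by ring.
  apply Hdelta; [lra|exact Hy].
Qed.

Lemma concave_secant (u : R -> R) (q h l : R) :
  concave_nonneg u -> 0 <= q -> 0 <= q + h -> h <> 0 -> 0 < l < 1 ->
  l * (u (q + h) - u q) <= u (q + l * h) - u q.
Proof.
  intros Hconc Hq Hqh Hh Hl.
  pose proof (Hconc (q + h) q l Hqh Hq ltac:(lra) Hl) as Hmid.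
  replace (l * (q + h) + (1 - l) * q) with (q + l * h) in Hmid by ring.
  lra.
Qed.

(* Tangent-line inequality: a concave function on [0,oo) lies below each of
   its tangent lines.  Shrinking the chord toward q turns [concave_secant]
   into a difference quotient, which is eps-close to D. *)
Lemma concave_tangent (u : R -> R) (q h D : R) :
  concave_nonneg u -> 0 <= q -> 0 <= q + h -> h <> 0 ->
  has_deriv_nonneg u q D ->
  u (q + h) <= u q + D * h.
Proof.
  intros Hconc Hq Hqh Hh Hder.
  assert (Hah : 0 < Rabs h) by (apply Rabs_pos_lt; exact Hh).
  apply Rle_plus_epsilon. intros eps Heps.
  destruct (Hder (eps / Rabs h)) as [delta [Hdelta Hquot]].
  { apply Rdiv_lt_0_compat; lra. }
  set (l := Rmin (1/2) (delta / (2 * Rabs h))).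
  assert (Hl_pos : 0 < l).
  { apply Rmin_glb_lt; [lra|]. apply Rdiv_lt_0_compat; lra. }
  assert (Hl_half : l <= 1/2) by apply Rmin_l.
  assert (Hl_step : l * Rabs h < delta).
  { assert (Hl_delta : l <= delta / (2 * Rabs h)) by apply Rmin_r.
    apply Rmult_le_compat_r with (r := Rabs h) in Hl_delta; [|lra].
    replace (delta / (2 * Rabs h) * Rabs h) with (delta / 2) in Hl_delta
      by (field; lra).
    lra. }
  assert (Hlh : l * h <> 0) by (apply Rmult_integral_contrapositive; split; lra).
  pose proof (Hquot (q + l * h) ltac:(nra) ltac:(lra)
    ltac:(replace (q + l * h - q) with (l * h) by ring;
          rewrite Rabs_mult, (Rabs_right l) by lra; lra)) as Hclose.
  replace (q + l * h - q) with (l * h) in Hclose by ring.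
  set (quot := (u (q + l * h) - u q) / (l * h)) in Hclose.
  assert (Hquot_h : h * quot <= D * h + eps).
  { assert (Hdev : Rabs (h * (quot - D)) < eps).
    { rewrite Rabs_mult.
      apply Rmult_lt_compat_l with (r := Rabs h) in Hclose; [|lra].
      replace (Rabs h * (eps / Rabs h)) with eps in Hclose by (field; lra).
      lra. }
    apply Rabs_def2 in Hdev. lra. }
  pose proof (concave_secant u q h l Hconc Hq Hqh Hh ltac:(lra)) as Hsecant.
  replace (u (q + l * h) - u q) with (l * (h * quot)) in Hsecant
    by (unfold quot; field; lra).
  apply Rmult_le_reg_l in Hsecant; lra.
Qed.

Lemma concave_deriv_antitone (u : R -> R) (q q' D D' : R) :
  concave_nonneg u -> 0 <= q -> q < q' ->
  has_deriv_nonneg u q D -> has_deriv_nonneg u q' D' -> D' <= D.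
Proof.
  intros Hconc Hq Hqq' Hder Hder'.
  pose proof (concave_tangent u q (q' - q) D Hconc Hq ltac:(lra) ltac:(lra) Hder) as Hfwd.
  pose proof (concave_tangent u q' (q - q') D' Hconc ltac:(lra) ltac:(lra)
                 ltac:(lra) Hder') as Hbwd.
  replace (q + (q' - q)) with q' in Hfwd by ring.
  replace (q' + (q - q')) with q in Hbwd by ring.
  nra.
Qed.

Lemma OmegaI_bounds (c d p r e'c u'1 lam be th : R) :
  0 < c -> 0 < e'c -> 0 < u'1 ->
  OmegaI c d p r e'c u'1 lam be th ->
  be * c * e'c + d * lam < th * u'1 /\ be * c * e'c < p * c + r * lam.
Proof.
  intros Hc He Hu [_ [Hth Hbe]].
  assert (Hce : 0 < c * e'c) by nra.
  split.
  - apply Rmult_gt_compat_r with (r := u'1) in Hth; [|lra].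
    replace ((be * c * e'c + d * lam) / u'1 * u'1) with (be * c * e'c + d * lam)
      in Hth by (field; lra).
    lra.
  - apply Rmult_lt_compat_r with (r := c * e'c) in Hbe; [|lra].
    replace ((p * c + r * lam) / (c * e'c) * (c * e'c)) with (p * c + r * lam)
      in Hbe by (field; lra).
    lra.
Qed.

Lemma cost_deriv_bounds (e ep : R -> R) (c w : R) :
  cost_hyp e ep -> 0 < c -> 0 <= w <= c -> 0 < ep c /\ ep w <= ep c.
Proof.
  intros (_ & _ & _ & _ & Hnonneg & Hincr & _) Hc Hw.
  split.
  - pose proof (Hincr 0 c ltac:(lra) Hc). pose proof (Hnonneg 0 ltac:(lra)). lra.
  - destruct (Req_dec w c) as [-> | Hwc]; [lra|].
    left. apply Hincr; lra.
Qed.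

Theorem lemma1 (T : nat) (Q pi : R) (d r c p theta beta : nat -> R)
  (u up e ep : nat -> R -> R) :
  (1 <= T)%nat -> 0 < Q -> 0 < pi ->
  (forall t, (t < T)%nat ->
     0 <= d t /\ 0 <= r t /\ 0 < c t /\ 0 < p t /\ 0 < theta t /\ 0 < beta t) ->
  (forall t, (t < T)%nat -> utility_hyp (u t) (up t)) ->
  (forall t, (t < T)%nat -> cost_hyp (e t) (ep t)) ->
  forall (x z : nat -> R) (s : R) (a b g : nat -> R) (mu lam : R),
  KKT T Q pi d r c p theta beta u e ep x z s a b g mu lam ->
  forall t, (t < T)%nat ->
  OmegaI (c t) (d t) (p t) (r t) (ep t (c t)) (up t 1) lam (beta t) (theta t) ->
  x t = 1 /\ z t = 0.
Proof.
  intros _ _ _ Hpar Hu He x z s a b g mu lam HK t Ht Hom.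
  destruct (Hpar t Ht) as (_ & _ & Hc & _ & Htheta & Hbeta).
  destruct (Hu t Ht) as (_ & _ & Hstrict & Hderiv & Hup_pos & _ & _).
  assert (Hconc : concave_nonneg (u t))
    by (intros ? ? ? ? ? ? ?; apply Rge_le, Rgt_ge, Hstrict; assumption).
  destruct HK as (Hfeas & _ & _ & Hmult & _ & _ & Hstat_x & Hstat_z & _ & Hslack & _).
  destruct (Hfeas t Ht) as (Hz0 & Hzx & Hx1).
  destruct (Hmult t Ht) as (Ha & Hb & Hg).
  destruct (Hslack t Ht) as (Haz & _ & Hgx).
  destruct (Hstat_x t Ht) as [du [Hdu Hstat_xt]].
  pose proof (Hstat_z t Ht) as Hstat_zt.
  destruct (cost_deriv_bounds (e t) (ep t) (c t) ((x t - z t) * c t) (He t Ht) Hc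
      ltac:(split; nra)) as [Hep_pos Hep_le].
  destruct (OmegaI_bounds _ _ _ _ _ _ _ _ _ Hc Hep_pos (Hup_pos 1 ltac:(lra)) Hom)
    as [Hvalue Hprice].
  assert (Hcost : beta t * c t * ep t ((x t - z t) * c t) <= beta t * c t * ep t (c t))
    by (apply Rmult_le_compat_l; nra).
  (* stationarity in z_t makes a_t positive, so slackness forces z_t = 0 *)
  assert (Hz : z t = 0) by nra.
  split; [|exact Hz].
  destruct (Req_dec (x t) 1) as [|Hx_ne]; [assumption|exfalso].
  (* for x_t < 1 slackness kills g_t, and stationarity in x_t gives
     theta_t u_t'(x_t) < theta_t u_t'(1), against concavity *)
  assert (Hg0 : g t = 0) by nra.
  assert (Hdu_small : du < up t 1) by nra.
  pose proof (concave_deriv_antitone (u t) (x t) 1 du (up t 1) Hconc ltac:(lra) ltac:(lra)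
    Hdu (derivable_pt_lim_has_deriv_nonneg _ _ _ (Hderiv 1 ltac:(lra)))).
  lra.
Qed.
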